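(* Let $R=k[t,t^{-1}]$ and $\mathcal R=(R,d/dt)$, and let $\mathcal A_1,\mathcal A_2$ be $\mathcal R$-conformal superalgebras such that the canonical maps $R\to\mathrm{Ctd}_k(\mathcal A_i)$, $r\mapsto r_{\mathcal A_i}$, are $k$-algebra isomorphisms for $i=1,2$. Then $\mathcal A_1\cong\mathcal A_2$ as $k$-conformal superalgebras if and only if $\mathcal A_1\cong\mathcal A_2$ as $\mathcal R$-conformal superalgebras.
   Context: Let $k$ be a field of characteristic $0$. An $\mathcal R$-conformal superalgebra (for $\mathcal R=(R,\delta_R)$, $R$ a commutative unital $k$-algebra with $k$-linear derivation $\delta_R$) is a $\mathbb Z/2\mathbb Z$-graded $R$-module $\mathcal A$ with parity-preserving $k$-linear $\partial_{\mathcal A}$ and $k$-bilinear products $a_{(n)}b$ ($n\in\mathbb Z_+$) satisfying: $a_{(n)}b=0$ for $n\gg0$; $(\partial_{\mathcal A}a)_{(n)}b=-na_{(n-1)}b$, $a_{(n)}\partial_{\mathcal A}b=\partial_{\mathcal A}(a_{(n)}b)+na_{(n-1)}b$; $\partial_{\mathcal A}(ra)=r\partial_{\mathcal A}a+\delta_R(r)a$; $a_{(n)}(rb)=r(a_{(n)}b)$, $(ra)_{(n)}b=\sum_j\frac1{j!}\delta_R^j(r)(a_{(n+j)}b)$. Homomorphisms: even $R$-linear maps preserving $n$-products and commuting with $\partial$. $k$-conformal means over $(k,0)$; restriction of scalars makes $\mathcal R$-conformal superalgebras $k$-conformal. $\mathrm{Ctd}_k(\mathcal A)$ is the set of even $k$-linear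 endomorphisms $\chi$ with $\chi(a_{(n)}b)=a_{(n)}\chi(b)$ for all $a,b,n$; $r_{\mathcal A}$ is $a\mapsto ra$. *)

From HB Require Import structures.
From mathcomp Require Import all_boot all_order all_algebra.
Set Implicit Arguments. Unset Strict Implicit. Unset Printing Implicit Defensive.
Import GRing.Theory.
Local Open Scope ring_scope.

Section Base.
Variables (k : fieldType) (R : comAlgType k).

Definition is_k_derivation (delta : R -> R) : Prop :=
  [/\ forall r s, delta (r + s) = delta r + delta s,
      forall r s, delta (r * s) = r * delta s + delta r * s
    & forall (c : k) r, delta (c *: r) = c *: delta r].

(* R = k[t, t^{-1}]: t is invertible with inverse ti, t is transcendental over k,
   and every element is ti^n * p(t) for a polynomial p; i.e. R is the
   k-algebra of Laurent polynomials in t (localisation of k[t] at t). *)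
Definition laurent_presentation (t ti : R) : Prop :=
  [/\ t * ti = 1,
      forall r : R, exists (n : nat) (p : {poly k}), r = ti ^+ n * horner_alg t p
    & forall p : {poly k}, horner_alg t p = 0 -> p = 0].
End Base.

Section Conformal.
Variables (k : fieldType) (R : comAlgType k) (delta : R -> R).

Definition is_Rsubmodule (V : lmodType R) (P : V -> Prop) : Prop :=
  [/\ P 0, forall a b, P a -> P b -> P (a + b)
    & forall (r : R) a, P a -> P (r *: a)].

Definition super_grading (V : lmodType R) (ev od : V -> Prop) : Prop :=
  [/\ is_Rsubmodule ev, is_Rsubmodule od,
      forall a, exists a0 a1, [/\ ev a0, od a1 & a = a0 + a1]
    & forall a, ev a -> od a -> a = 0].

Definition conf_axioms (V : lmodType R) (ev od : V -> Prop) (der : V -> V)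
    (prod : nat -> V -> V -> V) : Prop :=
  super_grading ev od /\
      (forall a, (ev a -> ev (der a)) /\ (od a -> od (der a))) /\
      (forall a b, der (a + b) = der a + der b) /\
      (* products are k-bilinear (additivity; scalars follow from the R-axioms)
         and respect the parity *)
      (forall n a b c, prod n (a + b) c = prod n a c + prod n b c
                    /\ prod n a (b + c) = prod n a b + prod n a c) /\
      (forall n a b,
          [/\ ev a -> ev b -> ev (prod n a b), ev a -> od b -> od (prod n a b),
              od a -> ev b -> od (prod n a b) & od a -> od b -> ev (prod n a b)]) /\
      (forall a b, exists N : nat, forall n, (N <= n)%N -> prod n a b = 0) /\
      (forall n a b, prod n (der a) b = - (prod n.-1 a b *+ n)) /\
      (forall n a b, prod n a (der b) = der (prod n a b) + prod n.-1 a b *+ n) /\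
      (forall (r : R) a, der (r *: a) = r *: der a + delta r *: a) /\
      (forall n (r : R) a b, prod n a (r *: b) = r *: prod n a b) /\
      (forall n (r : R) a b (N : nat),
          (forall m, (n + N <= m)%N -> prod m a b = 0) ->
          prod n (r *: a) b =
          \sum_(j < N) ((((j`!)%:R : k)^-1 *: iter j delta r) *: prod (n + j) a b)).

Record conf_superalg := ConfSuperalg {
  csa_car : lmodType R;
  csa_even : csa_car -> Prop;
  csa_odd : csa_car -> Prop;
  csa_der : csa_car -> csa_car;
  csa_prod : nat -> csa_car -> csa_car -> csa_car;
  csa_ax : conf_axioms csa_even csa_odd csa_der csa_prod }.

Definition kscale (V : lmodType R) (c : k) (a : V) : V := (c%:A : R) *: a.

Definition in_centroid (A : conf_superalg) (chi : csa_car A -> csa_car A) : Prop :=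
  [/\ forall a, (csa_even a -> csa_even (chi a)) /\ (csa_odd a -> csa_odd (chi a)),
      forall a b, chi (a + b) = chi a + chi b,
      forall (c : k) a, chi (kscale c a) = kscale c (chi a)
    & forall n a b, chi (csa_prod n a b) = csa_prod n a (chi b)].

(* the canonical map R -> Ctd_k(A), r |-> r_A, is a k-algebra isomorphism:
   it lands in Ctd_k(A), is injective and is surjective.  (It is automatically
   a k-algebra homomorphism for composition of endomorphisms.) *)
Definition canonical_ctd_iso (A : conf_superalg) : Prop :=
  [/\ forall r : R, @in_centroid A (fun a : csa_car A => r *: a),
      forall r s : R, (forall a : csa_car A, r *: a = s *: a) -> r = s
    & forall chi : csa_car A -> csa_car A, in_centroid chi -> exists r : R, forall a, chi a = r *: a].

Definition conf_hom_common (A B : conf_superalg) (f : csa_car A -> csa_car B) : Prop :=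
  [/\ forall a, (csa_even a -> csa_even (f a)) /\ (csa_odd a -> csa_odd (f a)),
      forall a b, f (a + b) = f a + f b,
      forall n a b, f (csa_prod n a b) = csa_prod n (f a) (f b)
    & forall a, f (csa_der a) = csa_der (f a)].

Definition R_conf_iso (A B : conf_superalg) (f : csa_car A -> csa_car B) : Prop :=
  [/\ bijective f, conf_hom_common f & forall (r : R) a, f (r *: a) = r *: f a].

(* isomorphism of the k-conformal superalgebras obtained by restriction of scalars
   (along (k,0) -> (R,delta)) *)
Definition k_conf_iso (A B : conf_superalg) (f : csa_car A -> csa_car B) : Prop :=
  [/\ bijective f, conf_hom_common f & forall (c : k) a, f (kscale c a) = kscale c (f a)].

Definition R_conf_isomorphic (A B : conf_superalg) : Prop := exists f : csa_car A -> csa_car B, R_conf_iso f.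
Definition k_conf_isomorphic (A B : conf_superalg) : Prop := exists f : csa_car A -> csa_car B, k_conf_iso f.

End Conformal.

From HB Require Import structures.
From mathcomp Require Import all_boot all_order all_algebra.
Set Implicit Arguments. Unset Strict Implicit. Unset Printing Implicit Defensive.
Import GRing.Theory.
Local Open Scope ring_scope.

(* Let f : A1 -> A2 be an isomorphism of k-conformal superalgebras with inverse g.
   For r in R, the conjugate b |-> f (r * g b) of r_{A1} lies in Ctd_k(A2), hence
   equals sigma(r)_{A2} for a unique sigma(r) in R, since R ~= Ctd_k(A2).  The map
   sigma is a k-algebra endomorphism of R, and it commutes with delta because f
   commutes with the derivations.  The heart of the proof is the rigidity of the
   differential algebra (k[t, t^-1], d/dt) in characteristic 0: its constants are
   the scalars, so sigma(t) is a unit with derivative 1, which forces sigma(t) = t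
   and hence sigma = id.  Thus f is R-linear; the converse direction is immediate. *)

Section Derivation.
Variables (k : fieldType) (R : comAlgType k) (delta : R -> R).
Hypothesis hdelta : is_k_derivation delta.

Lemma derivationD r s : delta (r + s) = delta r + delta s.
Proof. by case: hdelta. Qed.

Lemma derivationM r s : delta (r * s) = r * delta s + delta r * s.
Proof. by case: hdelta. Qed.

Lemma derivationZ (c : k) r : delta (c *: r) = c *: delta r.
Proof. by case: hdelta. Qed.

Lemma derivation0 : delta 0 = 0.
Proof. by apply: (@addrI _ (delta 0)); rewrite -derivationD !addr0. Qed.

Lemma derivationB r s : delta (r - s) = delta r - delta s.
Proof. by apply: (@addIr _ (delta s)); rewrite -derivationD !subrK. Qed.

Lemma derivation_alg (c : k) : delta c%:A = 0.
Proof.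
have d1 : delta 1 = 0.
  have e := derivationM 1 1; rewrite !mul1r !mulr1 in e.
  by apply: (@addIr _ (delta 1)); rewrite add0r -e.
by rewrite derivationZ d1 scaler0.
Qed.
End Derivation.

Section CharacteristicZero.
Variables (F : fieldType) (hF : [pchar F] =i pred0).

Lemma natmul_inj (x : F) m n : x != 0 -> x *+ m = x *+ n -> m = n.
Proof.
wlog mn : m n / (m <= n)%N => [sym|] x0 e.
  by case: (leqP m n) => [|/ltnW] le; [|apply/esym]; apply: sym.
move: e; rewrite -[in x *+ n](subnKC mn) mulrnDr -{1}[x *+ m]addr0 => /addrI/esym/eqP.
rewrite -mulr_natr mulf_eq0 (negbTE x0) /= ((pcharf0P _).1 hF) subn_eq0 => nm.
by apply/eqP; rewrite eqn_leq mn.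
Qed.

Lemma coef_Xderiv (p : {poly F}) i : ('X * p^`())`_i = p`_i *+ i.
Proof. by rewrite coefXM; case: i => [|i] //=; rewrite coef_deriv. Qed.

Lemma euler_monomial (p : {poly F}) n : 'X * p^`() = p *+ n -> p = p`_n *: 'X^n.
Proof.
move=> euler; apply/polyP => i; rewrite coefZ coefXn.
case: eqP => [-> | ni]; first by rewrite mulr1.
rewrite mulr0; have [//|pi0] := eqVneq p`_i 0; case: ni.
by apply: (natmul_inj pi0); rewrite -coef_Xderiv euler coefMn.
Qed.
End CharacteristicZero.

Section Laurent.
Variables (k : fieldType) (hk : [pchar k] =i pred0) (R : comAlgType k).
Variables (t ti : R) (delta : R -> R).
Hypotheses (hR : laurent_presentation t ti) (hdelta : is_k_derivation delta).
Hypothesis hdt : delta t = 1.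

Lemma horner_derivation (p : {poly k}) : delta (horner_alg t p) = horner_alg t p^`().
Proof.
elim/poly_ind: p => [|p c IH]; first by rewrite !rmorph0 derivation0 // deriv0 rmorph0.
rewrite derivMXaddC !rmorphD !rmorphM /= !horner_algX !horner_algC.
by rewrite derivationD // derivation_alg // addr0 derivationM // IH hdt mulr1.
Qed.

Lemma horner_alg_inj : injective (horner_alg t).
Proof.
case: hR => _ _ transc p q e; apply/eqP; rewrite -subr_eq0; apply/eqP/transc.
by rewrite rmorphB /= e subrr.
Qed.

Lemma expr_t_ti n : t ^+ n * ti ^+ n = 1.
Proof. by case: hR => tti _ _; rewrite -exprMn tti expr1n. Qed.

Lemma euler_expr_t n : t * delta (t ^+ n) = t ^+ n *+ n.
Proof.
have tn : t ^+ n = horner_alg t 'X^n by rewrite rmorphXn /= horner_algX.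
rewrite {1}tn horner_derivation derivXn rmorphMn rmorphXn /= horner_algX mulrnAr.
case: n {tn} => [|n]; first by rewrite !mulr0n.
by rewrite -exprS.
Qed.

Lemma laurent_constants (w : R) : delta w = 0 -> exists c : k, w = c%:A.
Proof.
move=> dw; case: hR => _ /(_ w) [n [p ew]] _.
have tw : t ^+ n * w = horner_alg t p by rewrite ew mulrA expr_t_ti mul1r.
have euler : 'X * p^`() = p *+ n.
  apply: horner_alg_inj; rewrite rmorphM rmorphMn /= horner_algX -horner_derivation -tw.
  by rewrite derivationM // dw mulr0 add0r mulrA euler_expr_t mulrnAl.
exists p`_n.
have -> : w = ti ^+ n * (t ^+ n * w) by rewrite mulrA [ti ^+ n * _]mulrC expr_t_ti mul1r.
rewrite tw {1}(euler_monomial hk euler) linearZ /= rmorphXn /= horner_algX.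
by rewrite mulrCA [ti ^+ n * _]mulrC expr_t_ti mulr1.
Qed.

(* The only unit of k[t, t^-1] with derivative 1 is t itself:
   u = t + c by the previous lemma, and t + c divides a power of t only if c = 0. *)
Lemma derivation_one_unit (u v : R) : delta u = 1 -> u * v = 1 -> u = t.
Proof.
move=> du uv.
have [c ec] : exists c : k, u - t = c%:A.
  by apply: laurent_constants; rewrite derivationB // du hdt subrr.
have eu : u = horner_alg t ('X + c%:P).
  by rewrite rmorphD /= horner_algX horner_algC -ec addrC subrK.
case: hR => _ /(_ v) [m [q ev]] _.
have divides : ('X + c%:P) * q = 'X^m.
  apply: horner_alg_inj; rewrite rmorphM rmorphXn /= horner_algX -eu.
  by rewrite -[t ^+ m]mulr1 -uv ev mulrCA [t ^+ m * _]mulrA expr_t_ti mul1r.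
have := congr1 (horner^~ (- c)) divides.
rewrite /= hornerM hornerXn hornerD hornerX hornerC addNr mul0r.
move/esym/eqP; rewrite expf_eq0 oppr_eq0 => /andP [_ /eqP c0].
by apply/eqP; rewrite -subr_eq0 ec c0 scale0r.
Qed.
End Laurent.

Section LaurentRigidity.
Variables (k : fieldType) (hk : [pchar k] =i pred0) (R : comAlgType k).
Variables (t ti : R) (delta : R -> R).
Hypotheses (hR : laurent_presentation t ti) (hdelta : is_k_derivation delta).
Hypothesis hdt : delta t = 1.

(* S is the graph of a k-algebra endomorphism of R commuting with delta. *)
Variable S : R -> R -> Prop.
Hypotheses (S_total : forall r, exists s, S r s)
  (S_functional : forall {r s s'}, S r s -> S r s' -> s = s').
Hypotheses (S1 : S 1 1) (SD : forall {r s r' s'}, S r s -> S r' s' -> S (r + r') (s + s'))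
  (SM : forall {r s r' s'}, S r s -> S r' s' -> S (r * r') (s * s'))
  (SZ : forall (c : k) {r s}, S r s -> S (c *: r) (c *: s))
  (Sdelta : forall {r s}, S r s -> S (delta r) (delta s)).

(* Such an endomorphism sends t to a unit with derivative 1, i.e. to t, hence it
   fixes k[t, t^-1] = k[t][ti]: the only differential k-endomorphism is the identity. *)
Lemma laurent_differential_endo_id r : S r r.
Proof.
have [u Su] := S_total t; have [v Sv] := S_total ti.
have tti : t * ti = 1 by case: hR.
have uv : u * v = 1 by apply: (S_functional (SM Su Sv)); rewrite tti.
have du : delta u = 1 by apply: (S_functional (Sdelta Su)); rewrite hdt.
have ut : u = t := derivation_one_unit hk hR hdelta hdt du uv.
have vti : v = ti by rewrite -[v]mul1r -tti mulrAC -ut uv mul1r.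
rewrite ut in Su; rewrite vti in Sv.
have S_horner p : S (horner_alg t p) (horner_alg t p).
  elim/poly_ind: p => [|p c IH].
    by rewrite rmorph0 -(scale0r 1); apply: SZ.
  rewrite rmorphD rmorphM /= horner_algX horner_algC.
  by apply: SD; [apply: SM | apply: SZ].
have S_ti n : S (ti ^+ n) (ti ^+ n).
  by elim: n => [|n IH]; rewrite ?expr0 // exprS; apply: SM.
by case: hR => _ /(_ r) [n [p ->]] _; apply: SM.
Qed.
End LaurentRigidity.

Section ConformalAxioms.
Variables (k : fieldType) (R : comAlgType k) (delta : R -> R).
Variable A : conf_superalg delta.

Lemma csa_grading : super_grading (@csa_even _ _ _ A) (@csa_odd _ _ _ A).
Proof. by case: (csa_ax A). Qed.

Lemma csa_derZ (r : R) (a : csa_car A) : csa_der (r *: a) = r *: csa_der a + delta r *: a.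
Proof. by case: (csa_ax A) => _ [_ [_ [_ [_ [_ [_ [_ [derZ _]]]]]]]]; apply: derZ. Qed.

Lemma csa_prodZ n (r : R) (a b : csa_car A) : csa_prod n a (r *: b) = r *: csa_prod n a b.
Proof. by case: (csa_ax A) => _ [_ [_ [_ [_ [_ [_ [_ [_ [prodZ _]]]]]]]]]; apply: prodZ. Qed.
End ConformalAxioms.

Lemma Rsubmodule_sub (k : fieldType) (R : comAlgType k) (V : lmodType R) (P : V -> Prop) :
  is_Rsubmodule P -> forall a b, P a -> P b -> P (a - b).
Proof. by case=> _ PD PZ a b Pa Pb; apply: PD => //; rewrite -scaleN1r; apply: PZ. Qed.

(* A bijective additive map between Z/2Z-graded modules that preserves parity
   has a parity-preserving inverse: the other component of a preimage is killed. *)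
Lemma inverse_preserves_parity (k : fieldType) (R : comAlgType k) (V W : lmodType R)
    (evV odV : V -> Prop) (evW odW : W -> Prop) (f : V -> W) (g : W -> V) :
  super_grading evV odV -> super_grading evW odW -> cancel f g -> cancel g f ->
  (forall a b, f (a + b) = f a + f b) ->
  (forall a, (evV a -> evW (f a)) /\ (odV a -> odW (f a))) ->
  forall b, (evW b -> evV (g b)) /\ (odW b -> odV (g b)).
Proof.
move=> [evV_sub odV_sub decV _] [evW_sub odW_sub _ intW] fg gf fD fpar b.
have f0 : f 0 = 0 by apply: (@addrI _ (f 0)); rewrite -fD !addr0.
have [a0 [a1 [ev0 od1 ga]]] := decV (g b).
have fga : b = f a0 + f a1 by rewrite -fD -ga gf.
have [fev0 _] := fpar a0; have [_ fod1] := fpar a1.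
split=> [evb | odb].
- have fa1 : f a1 = 0.
    apply: intW (fod1 od1); have -> : f a1 = b - f a0 by rewrite fga addrAC subrr add0r.
    exact: Rsubmodule_sub evW_sub _ _ evb (fev0 ev0).
  by rewrite ga (can_inj fg (etrans fa1 (esym f0))) addr0.
- have fa0 : f a0 = 0.
    apply: intW (fev0 ev0) _; have -> : f a0 = b - f a1 by rewrite fga addrK.
    exact: Rsubmodule_sub odW_sub _ _ odb (fod1 od1).
  by rewrite ga (can_inj fg (etrans fa0 (esym f0))) add0r.
Qed.

Section KIsomorphism.
Variables (k : fieldType) (R : comAlgType k) (delta : R -> R).
Variables (A1 A2 : conf_superalg delta).
Hypothesis h2 : canonical_ctd_iso A2.
Variables (f : csa_car A1 -> csa_car A2) (g : csa_car A2 -> csa_car A1).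
Hypotheses (hf : k_conf_iso f) (fg : cancel f g) (gf : cancel g f).

Let fD a b : f (a + b) = f a + f b. Proof. by case: hf => _ []. Qed.
Let fparity a : (csa_even a -> csa_even (f a)) /\ (csa_odd a -> csa_odd (f a)).
Proof. by case: hf => _ []. Qed.
Let fprod n a b : f (csa_prod n a b) = csa_prod n (f a) (f b). Proof. by case: hf => _ []. Qed.
Let fder a : f (csa_der a) = csa_der (f a). Proof. by case: hf => _ []. Qed.
Let fk c a : f (kscale c a) = kscale c (f a). Proof. by case: hf. Qed.

Let gD a b : g (a + b) = g a + g b.
Proof. by apply: (can_inj fg); rewrite fD !gf. Qed.
Let gk c a : g (kscale c a) = kscale c (g a).
Proof. by apply: (can_inj fg); rewrite fk !gf. Qed.
Let gprod n a b : g (csa_prod n a b) = csa_prod n (g a) (g b).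
Proof. by apply: (can_inj fg); rewrite fprod !gf. Qed.
Let gparity b : (csa_even b -> csa_even (g b)) /\ (csa_odd b -> csa_odd (g b)).
Proof.
exact: (inverse_preserves_parity (csa_grading A1) (csa_grading A2) fg gf fD fparity).
Qed.

Lemma conjugate_in_centroid (r : R) : in_centroid (fun b => f (r *: g b)).
Proof.
have [[_ _ evZ] [_ _ odZ] _ _] := csa_grading A1.
split.
- move=> b; have [gev god] := gparity b; have [fev fod] := fparity (r *: g b).
  by split=> [/gev /evZ /fev | /god /odZ /fod].
- by move=> a b; rewrite gD scalerDr fD.
- by move=> c a; rewrite gk -fk /kscale !scalerA mulrC.
- by move=> n a b; rewrite gprod -csa_prodZ fprod gf.
Qed.

(* sigma(r) = s: the conjugate of r_{A1} by f is s_{A2}. *)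
Definition conjugates_to (r s : R) : Prop := forall b, f (r *: g b) = s *: b.

Lemma conjugates_to_total r : exists s, conjugates_to r s.
Proof. by case: h2 => _ _ surj; apply: surj; apply: conjugate_in_centroid. Qed.

Lemma conjugates_to_functional r s s' : conjugates_to r s -> conjugates_to r s' -> s = s'.
Proof. by case: h2 => _ faithful _ rs rs'; apply: faithful => b; rewrite -rs -rs'. Qed.

Lemma conjugates_to1 : conjugates_to 1 1.
Proof. by move=> b; rewrite !scale1r gf. Qed.

Lemma conjugates_toD r s r' s' :
  conjugates_to r s -> conjugates_to r' s' -> conjugates_to (r + r') (s + s').
Proof. by move=> rs rs' b; rewrite scalerDl fD rs rs' scalerDl. Qed.

Lemma conjugates_toM r s r' s' :
  conjugates_to r s -> conjugates_to r' s' -> conjugates_to (r * r') (s * s').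
Proof. by move=> rs rs' b; rewrite -scalerA -[r' *: g b]fg rs rs' scalerA. Qed.

Lemma conjugates_toZ (c : k) r s : conjugates_to r s -> conjugates_to (c *: r) (c *: s).
Proof.
move=> rs b; have := fk c (r *: g b).
by rewrite rs /kscale !scalerA !mulr_algl.
Qed.

(* Since f commutes with the derivations, sigma commutes with delta. *)
Lemma conjugates_to_delta r s : conjugates_to r s -> conjugates_to (delta r) (delta s).
Proof.
move=> rs; have [s' rs'] := conjugates_to_total (delta r).
suff -> : delta s = s' by [].
case: h2 => _ faithful _; apply: faithful => b.
have := congr1 f (csa_derZ r (g b)).
rewrite fder rs fD rs' csa_derZ -[csa_der (g b)]fg rs fder gf.
by move/addrI.
Qed.

Variables (hk : [pchar k] =i pred0) (t ti : R).
Hypotheses (hR : laurent_presentation t ti) (hdelta : is_k_derivation delta).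
Hypothesis hdt : delta t = 1.

Lemma k_iso_is_R_linear (r : R) (a : csa_car A1) : f (r *: a) = r *: f a.
Proof.
have sigma_id := laurent_differential_endo_id hk hR hdelta hdt conjugates_to_total
  conjugates_to_functional conjugates_to1 conjugates_toD conjugates_toM
  conjugates_toZ conjugates_to_delta.
by rewrite -{1}(fg a) sigma_id.
Qed.
End KIsomorphism.

Theorem corollary3p27 (k : fieldType) (hk : [pchar k] =i pred0)
    (R : comAlgType k) (t ti : R) (delta : R -> R)
    (hR : laurent_presentation t ti)
    (hdelta : is_k_derivation delta) (hdt : delta t = 1)
    (A1 A2 : conf_superalg delta)
    (h1 : canonical_ctd_iso A1) (h2 : canonical_ctd_iso A2) :
  k_conf_isomorphic A1 A2 <-> R_conf_isomorphic A1 A2.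
Proof.
split=> [[f kf] | [f [fbij fhom fR]]].
- have [[g fg gf] fhom _] := kf.
  exists f; split=> //; first by exists g.
  exact: (k_iso_is_R_linear h2 kf fg gf hk hR hdelta hdt).
- by exists f; split=> // c a; apply: fR.
Qed.
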